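(* Let $(\mathbf{x}_t,\mathbf{z}_t,\mathbf{y}_t)_{t\ge 0}$ be generated by generalized Bregman ADMM (defined in the context) with parameters $\rho>0$, $\tau>0$, $\rho_{\mathbf{x}}\ge 0$, $\rho_{\mathbf{z}}\ge 0$, under the standing assumptions. Then for every $t\ge 0$ and every $\mathbf{x}^*,\mathbf{z}^*$ with $\mathbf{A}\mathbf{x}^*+\mathbf{B}\mathbf{z}^*=\mathbf{c}$ (and with all Bregman divergences below well defined), \begin{align*} &f(\mathbf{x}_{t+1})+g(\mathbf{z}_{t+1})-\big(f(\mathbf{x}^* )+g(\mathbf{z}^* )\big)\\ &\le -\langle \mathbf{y}_t,\mathbf{A}\mathbf{x}_{t+1}+\mathbf{B}\mathbf{z}_{t+1}-\mathbf{c}\rangle-\rho\big(B_\phi(\mathbf{c}-\mathbf{A}\mathbf{x}_{t+1},\mathbf{B}\mathbf{z}_t)+B_\phi(\mathbf{B}\mathbf{z}_{t+1},\mathbf{c}-\mathbf{A}\mathbf{x}_{t+1})\big)\\ &\quad+\rho\big(B_\phi(\mathbf{B}\mathbf{z}^*,\mathbf{B}\mathbf{z}_t)-B_\phi(\mathbf{B}\mathbf{z}^*,\mathbf{B}\mathbf{z}_{t+1})\big)\\ &\quad+\rho_{\mathbf{x}}\big(B_{\varphi_{\mathbf{x}}}(\mathbf{x}^*,\mathbf{x}_t)-B_{\varphi_{\mathbf{x}}}(\mathbf{x}^*,\mathbf{x}_{t+1})-B_{\varphi_{\mathbf{x}}}(\mathbf{x}_{t+1},\mathbf{x}_t)\big)\\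 &\quad+\rho_{\mathbf{z}}\big(B_{\varphi_{\mathbf{z}}}(\mathbf{z}^*,\mathbf{z}_t)-B_{\varphi_{\mathbf{z}}}(\mathbf{z}^*,\mathbf{z}_{t+1})-B_{\varphi_{\mathbf{z}}}(\mathbf{z}_{t+1},\mathbf{z}_t)\big). \end{align*}
   Context: Problem: $f:\mathbb{R}^{n_1}\to\mathbb{R}\cup\{+\infty\}$ and $g:\mathbb{R}^{n_2}\to\mathbb{R}\cup\{+\infty\}$ are closed, proper, convex; $\mathbf{A}\in\mathbb{R}^{m\times n_1}$, $\mathbf{B}\in\mathbb{R}^{m\times n_2}$, $\mathbf{c}\in\mathbb{R}^m$; $\mathcal{X}\subseteq\mathbb{R}^{n_1}$, $\mathcal{Z}\subseteq\mathbb{R}^{n_2}$ convex; the problem is $\min f(\mathbf{x})+g(\mathbf{z})$ s.t. $\mathbf{x}\in\mathcal{X},\mathbf{z}\in\mathcal{Z},\mathbf{A}\mathbf{x}+\mathbf{B}\mathbf{z}=\mathbf{c}$. For a continuously differentiable, strictly convex function $\psi$ on (the relative interior of) a convex set, the Bregman divergence is $B_\psi(\mathbf{u},\mathbf{v})=\psi(\mathbf{u})-\psi(\mathbf{v})-\langle\nabla\psi(\mathbf{v}),\mathbf{u}-\mathbf{v}\rangle\ge 0$. Three such functions are fixed: $\phi$ (on a convex subset of $\mathbb{R}^m$), $\varphi_{\mathbf{x}}$ (on $\mathbb{R}^{n_1}$ or a convex subset), $\varphi_{\mathbf{z}}$ (on $\mathbb{R}^{n_2}$ or a convex subset). Generalized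 Bregman ADMM: given $(\mathbf{x}_0,\mathbf{z}_0,\mathbf{y}_0)$ and parameters $\rho>0,\tau>0,\rho_{\mathbf{x}}\ge0,\rho_{\mathbf{z}}\ge0$, for $t\ge0$: $\mathbf{x}_{t+1}=\arg\min_{\mathbf{x}\in\mathcal{X}} f(\mathbf{x})+\langle\mathbf{y}_t,\mathbf{A}\mathbf{x}+\mathbf{B}\mathbf{z}_t-\mathbf{c}\rangle+\rho B_\phi(\mathbf{c}-\mathbf{A}\mathbf{x},\mathbf{B}\mathbf{z}_t)+\rho_{\mathbf{x}}B_{\varphi_{\mathbf{x}}}(\mathbf{x},\mathbf{x}_t)$; $\mathbf{z}_{t+1}=\arg\min_{\mathbf{z}\in\mathcal{Z}} g(\mathbf{z})+\langle\mathbf{y}_t,\mathbf{A}\mathbf{x}_{t+1}+\mathbf{B}\mathbf{z}-\mathbf{c}\rangle+\rho B_\phi(\mathbf{B}\mathbf{z},\mathbf{c}-\mathbf{A}\mathbf{x}_{t+1})+\rho_{\mathbf{z}}B_{\varphi_{\mathbf{z}}}(\mathbf{z},\mathbf{z}_t)$; $\mathbf{y}_{t+1}=\mathbf{y}_t+\tau(\mathbf{A}\mathbf{x}_{t+1}+\mathbf{B}\mathbf{z}_{t+1}-\mathbf{c})$. Standing assumptions: the minimizers exist; all Bregman divergences are evaluated at points where they are defined (second arguments where the generating function is differentiable); and the minimizers satisfy the first-order optimality conditions $-\mathbf{A}^T\{\mathbf{y}_t+\rho(\nabla\phi(\mathbf{B}\mathbf{z}_t)-\nabla\phi(\mathbf{c}-\mathbf{A}\mathbf{x}_{t+1}))\}-\rho_{\mathbf{x}}(\nabla\varphi_{\mathbf{x}}(\mathbf{x}_{t+1})-\nabla\varphi_{\mathbf{x}}(\mathbf{x}_t))\in\partial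 f(\mathbf{x}_{t+1})$ and $-\mathbf{B}^T\{\mathbf{y}_t+\rho(\nabla\phi(\mathbf{B}\mathbf{z}_{t+1})-\nabla\phi(\mathbf{c}-\mathbf{A}\mathbf{x}_{t+1}))\}-\rho_{\mathbf{z}}(\nabla\varphi_{\mathbf{z}}(\mathbf{z}_{t+1})-\nabla\varphi_{\mathbf{z}}(\mathbf{z}_t))\in\partial g(\mathbf{z}_{t+1})$ (e.g. the set constraints are absorbed into $f,g$ as indicator functions). *)

From Stdlib Require Import Reals.
From mathcomp Require Import ssreflect ssrfun ssrbool eqtype ssrnat seq choice fintype bigop.
Set Implicit Arguments. Unset Strict Implicit. Unset Printing Implicit Defensive.

Local Open Scope R_scope.

Definition vec (n : nat) := 'I_n -> R.
Definition mat (m n : nat) := 'I_m -> 'I_n -> R.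

Definition dot n (u v : vec n) : R := \big[Rplus/0]_(i < n) (u i * v i).
Definition vadd n (u v : vec n) : vec n := fun i => u i + v i.
Definition vsub n (u v : vec n) : vec n := fun i => u i - v i.
Definition vopp n (u : vec n) : vec n := fun i => - u i.
Definition vscale n (a : R) (u : vec n) : vec n := fun i => a * u i.
Definition vnorm n (u : vec n) : R := sqrt (dot u u).

Definition mulmv m n (A : mat m n) (x : vec n) : vec m :=
  fun i => \big[Rplus/0]_(j < n) (A i j * x j).
Definition mulmtv m n (A : mat m n) (y : vec m) : vec n :=
  fun j => \big[Rplus/0]_(i < m) (A i j * y i).

Definition convex_set n (C : vec n -> Prop) : Prop :=
  forall u v (l : R), C u -> C v -> 0 <= l <= 1 ->
    C (vadd (vscale l u) (vscale (1 - l) v)).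

(* f is +infinity outside the domain predicate D; convexity of the extended
   function = convex domain + convexity on the domain. *)
Definition convex_on n (C : vec n -> Prop) (f : vec n -> R) : Prop :=
  convex_set C /\
  forall u v (l : R), C u -> C v -> 0 <= l <= 1 ->
    f (vadd (vscale l u) (vscale (1 - l) v)) <= l * f u + (1 - l) * f v.

Definition strictly_convex_on n (C : vec n -> Prop) (f : vec n -> R) : Prop :=
  convex_set C /\
  forall u v (l : R), C u -> C v -> (exists i, u i <> v i) -> 0 < l < 1 ->
    f (vadd (vscale l u) (vscale (1 - l) v)) < l * f u + (1 - l) * f v.

Definition vconv n (u : nat -> vec n) (x : vec n) : Prop :=
  forall eps, 0 < eps -> exists N, forall k, (N <= k)%nat -> vnorm (vsub (u k) x) < eps.

(* closed = closed epigraph (lower semicontinuity of the extended function) *)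
Definition closed_fun n (D : vec n -> Prop) (f : vec n -> R) : Prop :=
  forall (u : nat -> vec n) (x : vec n) (a : R),
    (forall k, D (u k)) -> vconv u x -> (forall k, f (u k) <= a) -> D x /\ f x <= a.

Definition proper_fun n (D : vec n -> Prop) : Prop := exists x, D x.

Definition ccp_fun n (D : vec n -> Prop) (f : vec n -> R) : Prop :=
  convex_on D f /\ proper_fun D /\ closed_fun D f.

Definition subgrad n (D : vec n -> Prop) (f : vec n -> R) (x s : vec n) : Prop :=
  D x /\ forall u, D u -> f x + dot s (vsub u x) <= f u.

Definition has_grad_at n (C : vec n -> Prop) (psi : vec n -> R) (gv v : vec n) : Prop :=
  forall eps, 0 < eps -> exists delta, 0 < delta /\
    forall w, C w -> vnorm (vsub w v) < delta ->
      Rabs (psi w - psi v - dot gv (vsub w v)) <= eps * vnorm (vsub w v).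

Definition cont_on n (D : vec n -> Prop) (g : vec n -> vec n) : Prop :=
  forall v, D v -> forall eps, 0 < eps -> exists delta, 0 < delta /\
    forall w, D w -> vnorm (vsub w v) < delta -> vnorm (vsub (g w) (g v)) < eps.

(* psi is defined on the convex set C; D (contained in C, convex) is the set
   (e.g. relative interior of C) on which psi is continuously differentiable
   with gradient gpsi and strictly convex. *)
Definition bregman_gen n (C D : vec n -> Prop) (psi : vec n -> R) (gpsi : vec n -> vec n) : Prop :=
  convex_set C /\ (forall v, D v -> C v) /\ convex_set D /\
  strictly_convex_on D psi /\
  (forall v, D v -> has_grad_at C psi (gpsi v) v) /\
  cont_on D gpsi.

Definition breg n (psi : vec n -> R) (gpsi : vec n -> vec n) (u v : vec n) : R :=
  psi u - psi v - dot (gpsi v) (vsub u v).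

From HB Require Import structures.
From Stdlib Require Import Reals Lra FunctionalExtensionality.
From mathcomp Require Import ssreflect ssrfun ssrbool eqtype ssrnat seq choice fintype bigop.

Local Open Scope R_scope.

(* Each primal update is a "proximal block step": its optimality condition says
   that  -M^T w - r (grad psi(x_new) - grad psi(x_old))  is a subgradient of the
   block objective at x_new.  Combining the subgradient inequality at a point u
   with the adjoint identity  <M^T w, d> = <w, M d>  and the three-point identity
   of Bregman divergences
       <grad psi(v) - grad psi(w), u - v> = B(u,w) - B(u,v) - B(v,w)
   gives the one-block estimate [prox_block_estimate].  The theorem adds the
   estimates for the x- and z-blocks, uses feasibility  A x* = c - B z*  to merge
   the dual terms, and applies the three-point identity twice more to the
   Bregman terms generated by phi. *)

(* Real addition is a commutative monoid, so the generic big-operator lemmas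
   apply to the sums defining [dot] and [mulmv]. *)
HB.instance Definition _ :=
  Monoid.isComLaw.Build R 0 Rplus
    (fun a b c => esym (Rplus_assoc a b c)) Rplus_comm Rplus_0_l.

Lemma sumD n (F G : 'I_n -> R) :
  \big[Rplus/0]_(i < n) (F i + G i) =
  \big[Rplus/0]_(i < n) F i + \big[Rplus/0]_(i < n) G i.
Proof. exact: big_split. Qed.

Lemma sumZ n a (F : 'I_n -> R) :
  \big[Rplus/0]_(i < n) (a * F i) = a * \big[Rplus/0]_(i < n) F i.
Proof.
elim: n F => [|n IH] F; first by rewrite !big_ord0 /=; ring.
by rewrite !big_ord_recr /= IH Rmult_plus_distr_l.
Qed.

Lemma sumB n (F G : 'I_n -> R) :
  \big[Rplus/0]_(i < n) (F i - G i) =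
  \big[Rplus/0]_(i < n) F i - \big[Rplus/0]_(i < n) G i.
Proof.
have -> : \big[Rplus/0]_(i < n) (F i - G i) =
          \big[Rplus/0]_(i < n) (F i + (-1) * G i) by apply: eq_bigr => i _; ring.
by rewrite sumD sumZ; ring.
Qed.

Lemma dot_comm n (u v : vec n) : dot u v = dot v u.
Proof. by apply: eq_bigr => i _; rewrite Rmult_comm. Qed.

Lemma dot_addl n (u v w : vec n) : dot (vadd v w) u = dot v u + dot w u.
Proof. by rewrite /dot -sumD; apply: eq_bigr => i _; rewrite /vadd; ring. Qed.

Lemma dot_subl n (u v w : vec n) : dot (vsub v w) u = dot v u - dot w u.
Proof. by rewrite /dot -sumB; apply: eq_bigr => i _; rewrite /vsub; ring. Qed.

Lemma dot_scalel n (u v : vec n) a : dot (vscale a v) u = a * dot v u.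
Proof. by rewrite /dot -sumZ; apply: eq_bigr => i _; rewrite /vscale; ring. Qed.

Lemma dot_oppl n (u v : vec n) : dot (vopp v) u = - dot v u.
Proof.
have -> : - dot v u = (-1) * dot v u by ring.
by rewrite /dot -sumZ; apply: eq_bigr => i _; rewrite /vopp; ring.
Qed.

Lemma dot_addr n (u v w : vec n) : dot u (vadd v w) = dot u v + dot u w.
Proof. by rewrite dot_comm dot_addl !(dot_comm _ u). Qed.

Lemma dot_subr n (u v w : vec n) : dot u (vsub v w) = dot u v - dot u w.
Proof. by rewrite dot_comm dot_subl !(dot_comm _ u). Qed.

Lemma dot_mulmtv k n (M : mat k n) (w : vec k) (d : vec n) :
  dot (mulmtv M w) d = dot w (mulmv M d).
Proof.
rewrite /dot /mulmtv /mulmv.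
transitivity (\big[Rplus/0]_(j < n) \big[Rplus/0]_(i < k) (w i * (M i j * d j))).
  by apply: eq_bigr => j _; rewrite Rmult_comm -sumZ; apply: eq_bigr => i _; ring.
rewrite exchange_big /=; apply: eq_bigr => i _.
by rewrite -sumZ; apply: eq_bigr => j _; ring.
Qed.

Lemma mulmv_sub k n (M : mat k n) (u v : vec n) :
  mulmv M (vsub u v) = vsub (mulmv M u) (mulmv M v).
Proof.
rewrite /mulmv /vsub; apply: functional_extensionality => i.
by rewrite -sumB; apply: eq_bigr => j _; ring.
Qed.

Lemma breg_three_point {n : nat} (psi : vec n -> R) (gpsi : vec n -> vec n) (u v w : vec n) :
  dot (vsub (gpsi v) (gpsi w)) (vsub u v) =
  breg psi gpsi u w - breg psi gpsi u v - breg psi gpsi v w.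
Proof. by rewrite /breg dot_subl !dot_subr; ring. Qed.

Lemma prox_block_estimate {k n : nat} {M : mat k n} {D : vec n -> Prop} {h : vec n -> R}
    (psi : vec n -> R) {gpsi : vec n -> vec n} {r : R} {w : vec k} {xo xn u : vec n} :
  subgrad D h xn (vsub (vopp (mulmtv M w)) (vscale r (vsub (gpsi xn) (gpsi xo)))) ->
  D u ->
  h xn - h u <= dot w (vsub (mulmv M u) (mulmv M xn))
                + r * (breg psi gpsi u xo - breg psi gpsi u xn - breg psi gpsi xn xo).
Proof.
move=> [_ Hsub] Du; have := Hsub u Du.
rewrite dot_subl dot_oppl dot_scalel dot_mulmtv -mulmv_sub.
rewrite (breg_three_point psi gpsi u xn xo); lra.
Qed.

Theorem lemma1
  (n1 n2 m : nat)
  (f : vec n1 -> R) (Df : vec n1 -> Prop)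
  (g : vec n2 -> R) (Dg : vec n2 -> Prop)
  (A : mat m n1) (B : mat m n2) (c : vec m)
  (X : vec n1 -> Prop) (Z : vec n2 -> Prop)
  (phi : vec m -> R) (gphi : vec m -> vec m) (Cphi Dphi : vec m -> Prop)
  (phx : vec n1 -> R) (gphx : vec n1 -> vec n1) (Cphx Dphx : vec n1 -> Prop)
  (phz : vec n2 -> R) (gphz : vec n2 -> vec n2) (Cphz Dphz : vec n2 -> Prop)
  (rho tau rhox rhoz : R)
  (x : nat -> vec n1) (z : nat -> vec n2) (y : nat -> vec m)
  (Hf : ccp_fun Df f) (Hg : ccp_fun Dg g)
  (HX : convex_set X) (HZ : convex_set Z)
  (Hphi : bregman_gen Cphi Dphi phi gphi)
  (Hphx : bregman_gen Cphx Dphx phx gphx)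
  (Hphz : bregman_gen Cphz Dphz phz gphz)
  (Hrho : 0 < rho) (Htau : 0 < tau) (Hrhox : 0 <= rhox) (Hrhoz : 0 <= rhoz)
  (* Bregman divergences in the iteration are well defined *)
  (Hdx : forall t, Dphx (x t)) (Hdz : forall t, Dphz (z t))
  (HdBz : forall t, Dphi (mulmv B (z t)))
  (HdAx : forall t, Dphi (vsub c (mulmv A (x t.+1))))
  (* x-update: x_{t+1} is a minimizer *)
  (Hxmin : forall t,
     X (x t.+1) /\ Df (x t.+1) /\
     forall u, X u -> Df u -> Cphi (vsub c (mulmv A u)) -> Cphx u ->
       f (x t.+1) + dot (y t) (vsub (vadd (mulmv A (x t.+1)) (mulmv B (z t))) c)
         + rho * breg phi gphi (vsub c (mulmv A (x t.+1))) (mulmv B (z t))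
         + rhox * breg phx gphx (x t.+1) (x t)
       <= f u + dot (y t) (vsub (vadd (mulmv A u) (mulmv B (z t))) c)
         + rho * breg phi gphi (vsub c (mulmv A u)) (mulmv B (z t))
         + rhox * breg phx gphx u (x t))
  (* z-update: z_{t+1} is a minimizer *)
  (Hzmin : forall t,
     Z (z t.+1) /\ Dg (z t.+1) /\
     forall u, Z u -> Dg u -> Cphi (mulmv B u) -> Cphz u ->
       g (z t.+1) + dot (y t) (vsub (vadd (mulmv A (x t.+1)) (mulmv B (z t.+1))) c)
         + rho * breg phi gphi (mulmv B (z t.+1)) (vsub c (mulmv A (x t.+1)))
         + rhoz * breg phz gphz (z t.+1) (z t)
       <= g u + dot (y t) (vsub (vadd (mulmv A (x t.+1)) (mulmv B u)) c)
         + rho * breg phi gphi (mulmv B u) (vsub c (mulmv A (x t.+1)))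
         + rhoz * breg phz gphz u (z t))
  (* y-update *)
  (Hy : forall t i, y t.+1 i =
     y t i + tau * (mulmv A (x t.+1) i + mulmv B (z t.+1) i - c i))
  (* first-order optimality conditions *)
  (Hxopt : forall t, subgrad Df f (x t.+1)
     (vsub (vopp (mulmtv A (vadd (y t)
              (vscale rho (vsub (gphi (mulmv B (z t))) (gphi (vsub c (mulmv A (x t.+1)))))))))
           (vscale rhox (vsub (gphx (x t.+1)) (gphx (x t))))))
  (Hzopt : forall t, subgrad Dg g (z t.+1)
     (vsub (vopp (mulmtv B (vadd (y t)
              (vscale rho (vsub (gphi (mulmv B (z t.+1))) (gphi (vsub c (mulmv A (x t.+1)))))))))
           (vscale rhoz (vsub (gphz (z t.+1)) (gphz (z t))))))
  :
  forall (t : nat) (xs : vec n1) (zs : vec n2),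
    (forall i, mulmv A xs i + mulmv B zs i = c i) ->
    Df xs -> Dg zs ->
    Cphx xs -> Cphz zs -> Cphi (mulmv B zs) ->
    f (x t.+1) + g (z t.+1) - (f xs + g zs)
    <= - dot (y t) (vsub (vadd (mulmv A (x t.+1)) (mulmv B (z t.+1))) c)
       - rho * (breg phi gphi (vsub c (mulmv A (x t.+1))) (mulmv B (z t))
                + breg phi gphi (mulmv B (z t.+1)) (vsub c (mulmv A (x t.+1))))
       + rho * (breg phi gphi (mulmv B zs) (mulmv B (z t))
                - breg phi gphi (mulmv B zs) (mulmv B (z t.+1)))
       + rhox * (breg phx gphx xs (x t) - breg phx gphx xs (x t.+1)
                 - breg phx gphx (x t.+1) (x t))
       + rhoz * (breg phz gphz zs (z t) - breg phz gphz zs (z t.+1)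
                 - breg phz gphz (z t.+1) (z t)).
Proof.
move=> t xs zs Hfeas Dxs Dzs _ _ _.
have Ex := prox_block_estimate phx (Hxopt t) Dxs.
have Ez := prox_block_estimate phz (Hzopt t) Dzs.
have HAxs : mulmv A xs = vsub c (mulmv B zs).
  by apply: functional_extensionality => i;
     rewrite /vsub -(Hfeas i); ring.
have Tx := Rmult_eq_compat_l rho _ _ (breg_three_point phi gphi (mulmv B zs)
             (vsub c (mulmv A (x t.+1))) (mulmv B (z t))).
have Tz := Rmult_eq_compat_l rho _ _ (breg_three_point phi gphi (mulmv B zs)
             (mulmv B (z t.+1)) (vsub c (mulmv A (x t.+1)))).
(* expanding all inner products, the claim is the sum of the four facts *)
rewrite HAxs in Ex.
move: Ex Ez Tx Tz.
rewrite !(dot_addl, dot_scalel, dot_subl, dot_addr, dot_subr).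
lra.
Qed.
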